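(* Let $n>0$ be an integer. Let $(\pi_i)_{-n<i<n}$ be arbitrary probabilities in $[0,1]$. Consider the Markov chain $X_0,X_1,\ldots$ on $\{-n,\ldots,n\}$ with reflecting barriers, whose transition probabilities are $$p_{-n,-n+1}=p_{n,n-1}=1,\qquad p_{i,i+1}=\pi_i,\quad p_{i,i-1}=1-\pi_i\quad(-n<i<n).$$ All other transition probabilities are $0$. For states $i,j$, let $T_{i,j}=\min\{t>0: X_t=j\}$ be the hitting time of $j$ when the chain is started at $X_0=i$. Then $$\max\left(\mathrm{E}\{T_{0,n}\},\mathrm{E}\{T_{0,-n}\}\right)\ge \frac{2}{3}n^2.$$
   Context: Expectations may be infinite. *)

From HB Require Import structures.
From mathcomp Require Import all_boot all_order all_algebra.
From mathcomp Require Import all_classical all_reals all_analysis.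
Set Implicit Arguments. Unset Strict Implicit. Unset Printing Implicit Defensive.
Import Order.TTheory GRing.Theory Num.Theory.
Local Open Scope ring_scope.

Definition states (n : nat) : seq int :=
  [seq (k%:Z - n%:Z) | k <- iota 0 (n.*2.+1)].

Definition trans (R : nzRingType) (n : nat) (pi : int -> R) (x y : int) : R :=
  if x == - n%:Z then (y == - n%:Z + 1)%:R
  else if x == n%:Z then (y == n%:Z - 1)%:R
  else if y == x + 1 then pi x
  else if y == x - 1 then 1 - pi x
  else 0.

(* mass n pi i j t y = P_i( X_t = y and X_s <> j for all 0 < s <= t ). *)
Fixpoint mass (R : nzRingType) (n : nat) (pi : int -> R) (i j : int) (t : nat)
  : int -> R :=
  match t with
  | 0 => fun y => (y == i)%:R
  | t'.+1 => fun y =>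
      if y == j then 0
      else \sum_(x <- states n) mass n pi i j t' x * trans n pi x y
  end.

(* P_i( T_{i,j} > t ), where T_{i,j} = min {t > 0 : X_t = j}. *)
Definition surv (R : nzRingType) (n : nat) (pi : int -> R) (i j : int) (t : nat) : R :=
  \sum_(y <- states n) mass n pi i j t y.

(* E{T_{i,j}} = \sum_{t >= 0} P(T_{i,j} > t) in [0, +oo]
   (equals +oo when T_{i,j} = oo with positive probability). *)
Definition expected_hitting_time (R : realType) (n : nat) (pi : int -> R)
  (i j : int) : \bar R :=
  (\sum_(0 <= t <oo) (surv n pi i j t)%:E)%E.

From mathcomp Require Import all_boot all_order all_algebra.
From mathcomp Require Import all_classical all_reals all_analysis.
From mathcomp Require Import zify ring lra.
Import Order.TTheory GRing.Theory Num.Theory.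
Local Open Scope ring_scope.
Set Implicit Arguments. Unset Strict Implicit. Unset Printing Implicit Defensive.

(* Lower bounds on expected hitting times come from a Foster-type argument: if
   g vanishes at the target, is bounded, and decreases by at most 1 in
   expectation at each step, then g(i) <= E T_(i,j).  Reading the walk on the
   indices k = x + n and taking g = sum_(m >= k) e_m, this reduces to the
   first-step inequalities e_0 <= 1 and p_k e_k <= 1 + q_k e_(k-1), where e_m
   stands for the time needed to pass from index m to m + 1.

   If the walk started at 0 can be trapped at a state it cannot leave upwards,
   e can be made arbitrarily large and E T_(0,n) is infinite; symmetrically for
   E T_(0,-n).  Otherwise all interior p_k lie in (0,1), the walk is
   reversible, and with c_m its stationary flow from m to m + 1 the exact
   crossing times e_m = 1 + 2 (c_0 + ... + c_(m-1)) / c_m can be used.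
   This gives E T_(0,n) >= 2 A B' and, through the mirror symmetry x |-> -x,
   E T_(0,-n) >= 2 B A', where A, B are the masses of c on the left and right
   halves and A', B' those of 1/c.  Since c_l/c_m + c_m/c_l >= 2, we get
   A B' + B A' >= 2 n^2, so the larger of the two times is at least 2 n^2. *)

Lemma mem_states n (x : int) : (x \in states n) = (- n%:Z <= x <= n%:Z).
Proof.
apply/mapP/idP => [[k] | x_in]; first by rewrite mem_iota => /andP[_ ?] ->; lia.
by exists (absz (x + n%:Z)); rewrite ?mem_iota; lia.
Qed.

Lemma uniq_states n : uniq (states n).
Proof. by rewrite map_inj_uniq ?iota_uniq // => a b; lia. Qed.

Lemma sum_states_delta (R : nzRingType) n (a : int) (F : int -> R) :
  a \in states n -> \sum_(y <- states n) (y == a)%:R * F y = F a.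
Proof.
move=> a_in; rewrite (bigD1_seq a) ?uniq_states //= eqxx mul1r big1 ?addr0 //.
by move=> y /negbTE ->; rewrite mul0r.
Qed.

Lemma sum_states_opp (R : nzRingType) n (F : int -> R) :
  \sum_(x <- states n) F (- x) = \sum_(x <- states n) F x.
Proof.
rewrite -(big_map (fun x => - x) predT F); apply: perm_big.
apply: uniq_perm; rewrite ?uniq_states ?(map_inj_uniq oppr_inj) ?uniq_states //.
by move=> x; rewrite -[x in LHS]opprK (mem_map oppr_inj) !mem_states; lia.
Qed.

Lemma trans_ge0 (R : realDomainType) n (pi : int -> R) x y :
  (forall i, - n%:Z < i < n%:Z -> 0 <= pi i <= 1) ->
  x \in states n -> 0 <= trans n pi x y.
Proof.
rewrite mem_states /trans => pi01 x_in.
case: eqP => [_ | x_neq_l]; first exact: ler0n.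
case: eqP => [_ | x_neq_r]; first exact: ler0n.
have /andP[pi_ge0 pi_le1] : 0 <= pi x <= 1 by apply: pi01; lia.
by case: eqP => _ //; case: eqP => _ //; rewrite subr_ge0.
Qed.

Definition mirror (R : nzRingType) (pi : int -> R) (x : int) : R := 1 - pi (- x).

Lemma mirrorK (R : nzRingType) (pi : int -> R) : mirror (mirror pi) = pi.
Proof. by apply/funext => x; rewrite /mirror opprK opprB addrC subrK. Qed.

Lemma mirror01 (R : realDomainType) n (pi : int -> R) :
  (forall i, - n%:Z < i < n%:Z -> 0 <= pi i <= 1) ->
  (forall i, - n%:Z < i < n%:Z -> 0 <= mirror pi i <= 1).
Proof.
move=> pi01 i i_in; have /andP[? ?] : 0 <= pi (- i) <= 1 by apply: pi01; lia.
by rewrite /mirror subr_ge0 lerBlDr lerDl; apply/andP.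
Qed.

Lemma trans_mirror (R : nzRingType) n (pi : int -> R) x y : (0 < n)%N ->
  trans n (mirror pi) x y = trans n pi (- x) (- y).
Proof.
move=> n_gt0; rewrite /trans /mirror.
have -> : (- x == - n%:Z) = (x == n%:Z) by rewrite eqr_opp.
have -> : (- x == n%:Z) = (x == - n%:Z) by rewrite eqr_oppLR.
have -> : (- y == - n%:Z + 1) = (y == n%:Z - 1) by apply/eqP/eqP; lia.
have -> : (- y == n%:Z - 1) = (y == - n%:Z + 1) by apply/eqP/eqP; lia.
have -> : (- y == - x + 1) = (y == x - 1) by apply/eqP/eqP; lia.
have -> : (- y == - x - 1) = (y == x + 1) by apply/eqP/eqP; lia.
case: (x =P - n%:Z) => [-> | _]; first by rewrite ifN //; apply/eqP; lia.
case: (x =P n%:Z) => // _.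
case: (y =P x + 1) => [-> | _]; first by rewrite ifN //; apply/eqP; lia.
by case: (y =P x - 1) => // _; rewrite opprB addrC subrK.
Qed.

Lemma mass_mirror (R : nzRingType) n (pi : int -> R) i j t y : (0 < n)%N ->
  mass n (mirror pi) (- i) (- j) t (- y) = mass n pi i j t y.
Proof.
move=> n_gt0; elim: t y => [|t IH] y /=; rewrite eqr_opp //.
case: eqP => // _; rewrite -sum_states_opp.
by apply: eq_bigr => x _; rewrite IH trans_mirror // !opprK.
Qed.

Lemma expected_hitting_time_mirror (R : realType) n (pi : int -> R) i j :
  (0 < n)%N ->
  expected_hitting_time n (mirror pi) (- i) (- j) = expected_hitting_time n pi i j.
Proof.
move=> n_gt0; apply: eq_eseriesr => t _; congr (_%:E).
by rewrite /surv -sum_states_opp; apply: eq_bigr => y _; rewrite mass_mirror.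
Qed.

Lemma le_of_partial_sums_drift (R : archiFieldType) (u : nat -> R) (a r M : R) :
  0 <= M -> (forall t, \sum_(0 <= s < t) u s <= r) ->
  (forall t, a <= \sum_(0 <= s < t) u s + M * u t) -> a <= r.
Proof.
move=> M_ge0 P_le drift.
have r_ge0 : 0 <= r by have := P_le 0%N; rewrite big_geq.
have lin T : T%:R * (a - r) <= M * \sum_(0 <= s < T) u s.
  elim: T => [|T IH]; first by rewrite big_geq // mul0r mulr0.
  have := drift T; have := P_le T.
  by rewrite big_nat_recr //= -natr1 mulrDl mul1r mulrDr; lra.
rewrite leNgt; apply/negP => r_lt_a.
have ar_gt0 : 0 < a - r by rewrite subr_gt0.
have := archi_boundP (divr_ge0 (mulr_ge0 M_ge0 r_ge0) (ltW ar_gt0)).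
set T := Num.Def.archi_bound _; rewrite ltr_pdivrMr //.
apply/negP; rewrite -leNgt; apply: le_trans (lin T) _.
exact: ler_wpM2l (P_le T).
Qed.

Lemma ler_sum_nat_term (R : numDomainType) (a b k : nat) (F : nat -> R) :
  (a <= k < b)%N -> (forall m, (a <= m < b)%N -> 0 <= F m) ->
  F k <= \sum_(a <= m < b) F m.
Proof.
move=> k_in F_ge0; rewrite (bigD1_seq k) ?mem_index_iota ?iota_uniq //= lerDl.
by rewrite big_seq_cond sumr_ge0 // => m /andP[]; rewrite mem_index_iota => /F_ge0.
Qed.

Section HittingTimeLowerBound.
Variables (R : realType) (n : nat) (pi : int -> R).
Hypothesis pi01 : forall x, - n%:Z < x < n%:Z -> 0 <= pi x <= 1.

Lemma mass_ge0 i j t y : 0 <= mass n pi i j t y.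
Proof.
elim: t y => [|t IH] y /=; first exact: ler0n.
case: eqP => _ //; rewrite big_seq; apply: sumr_ge0 => x x_in.
by rewrite mulr_ge0 // trans_ge0.
Qed.

Lemma mass_target i j t : i != j -> mass n pi i j t j = 0.
Proof. by move=> /negbTE i_neq_j; case: t => [|t] /=; rewrite ?eqxx // eq_sym i_neq_j. Qed.

Variables (i j : int) (g : int -> R) (M : R).
Hypotheses (i_in : i \in states n) (i_neq_j : i != j) (gj0 : g j = 0).
Hypothesis g_le : forall x, x \in states n -> g x <= M.
Hypothesis g_drift : forall x, x \in states n -> x != j ->
  g x - 1 <= \sum_(y <- states n) trans n pi x y * g y.

Let S t := \sum_(y <- states n) mass n pi i j t y * g y.

Lemma potential_step t : S t - surv n pi i j t <= S t.+1.
Proof.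
have -> : S t.+1 = \sum_(y <- states n)
    (\sum_(x <- states n) mass n pi i j t x * trans n pi x y) * g y.
  by apply: eq_bigr => y _ /=; case: eqP => [-> | _]; rewrite ?gj0 ?mulr0.
have -> : S t - surv n pi i j t =
    \sum_(x <- states n) mass n pi i j t x * (g x - 1).
  by rewrite /S /surv -sumrB; apply: eq_bigr => x _; rewrite mulrBr mulr1.
under [X in _ <= X]eq_bigr do rewrite big_distrl /=.
rewrite exchange_big /= !big_seq; apply: ler_sum => x x_in.
under eq_bigr do rewrite -mulrA; rewrite -big_distrr /=.
have [-> | x_neq_j] := eqVneq x j; first by rewrite mass_target // !mul0r.
by rewrite ler_wpM2l ?mass_ge0 ?g_drift.
Qed.

Lemma potential_le t :
  g i <= \sum_(0 <= s < t) surv n pi i j s + M * surv n pi i j t.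
Proof.
have S_le : S t <= M * surv n pi i j t.
  rewrite /S /surv big_distrr !big_seq; apply: ler_sum => y y_in.
  by rewrite mulrC ler_wpM2r ?mass_ge0 ?g_le.
suff : g i - \sum_(0 <= s < t) surv n pi i j s <= S t by lra.
elim: t {S_le} => [|t IH].
  by rewrite big_geq // subr0 /S (eq_bigr (fun y => (y == i)%:R * g y)) ?sum_states_delta.
by rewrite big_nat_recr //=; have := potential_step t; lra.
Qed.

Lemma hitting_time_ge_potential : 0 <= M ->
  ((g i)%:E <= expected_hitting_time n pi i j)%E.
Proof.
move=> M_ge0.
have partial_le t :
    ((\sum_(0 <= s < t) surv n pi i j s)%:E <= expected_hitting_time n pi i j)%E.
  rewrite -sumEFin; apply: nneseries_lim_ge => s _ _.
  by rewrite lee_fin /surv big_seq sumr_ge0 // => y _; exact: mass_ge0.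
case E : expected_hitting_time => [r | | ]; last 2 first.
- exact: leey.
- by have := partial_le 0%N; rewrite E big_geq.
rewrite lee_fin; apply: (le_of_partial_sums_drift M_ge0) potential_le.
by move=> t; have := partial_le t; rewrite E lee_fin.
Qed.

End HittingTimeLowerBound.

Lemma sum_trans_left_end (R : nzRingType) n (pi : int -> R) (g : int -> R) :
  (0 < n)%N ->
  \sum_(y <- states n) trans n pi (- n%:Z) y * g y = g (- n%:Z + 1).
Proof.
move=> n_gt0; rewrite -(@sum_states_delta _ n); last by rewrite mem_states; lia.
by apply: eq_bigr => y _; rewrite /trans eqxx.
Qed.

Lemma sum_trans_interior (R : nzRingType) n (pi : int -> R) (g : int -> R) x :
  - n%:Z < x < n%:Z ->
  \sum_(y <- states n) trans n pi x y * g y =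
  pi x * g (x + 1) + (1 - pi x) * g (x - 1).
Proof.
move=> x_in.
have up_in : x + 1 \in states n by rewrite mem_states; lia.
have down_in : x - 1 \in states n by rewrite mem_states; lia.
rewrite -(sum_states_delta (fun y => pi x * g y) up_in).
rewrite -(sum_states_delta (fun y => (1 - pi x) * g y) down_in) -big_split /=.
apply: eq_bigr => y _; rewrite /trans ifN; last by apply/eqP; lia.
rewrite ifN; last by apply/eqP; lia.
case: (y =P x + 1) => [-> | _].
  have -> : (x + 1 == x - 1) = false by apply/eqP; lia.
  by rewrite mul1r mul0r addr0.
by case: (y =P x - 1); rewrite /= ?mulr1n mulr0n !mul0r ?add0r ?mul1r.
Qed.

Definition state (n k : nat) : int := k%:Z - n%:Z.

Section CrossingTimes.
Variables (R : realType) (n : nat) (pi : int -> R) (e : nat -> R).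
Hypothesis n_gt0 : (0 < n)%N.
Hypothesis pi01 : forall x, - n%:Z < x < n%:Z -> 0 <= pi x <= 1.
Hypothesis e_ge0 : forall m, (m < n.*2)%N -> 0 <= e m.
Hypothesis e0_le1 : e 0%N <= 1.
(* [e m] bounds from below the time needed to pass from index [m] to [m + 1]. *)
Hypothesis e_drift : forall k, (0 < k < n.*2)%N ->
  pi (state n k) * e k <= 1 + (1 - pi (state n k)) * e k.-1.

Let g (x : int) : R := \sum_(absz (x + n%:Z) <= m < n.*2) e m.

Let g_state_step k : (k < n.*2)%N -> g (state n k) = e k + g (state n k + 1).
Proof.
move=> k_lt; rewrite /g.
have -> : absz (state n k + n%:Z) = k by rewrite /state; lia.
have -> : absz (state n k + 1 + n%:Z) = k.+1 by rewrite /state; lia.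
exact: big_ltn.
Qed.

Let g_drift x : x \in states n -> x != n%:Z ->
  g x - 1 <= \sum_(y <- states n) trans n pi x y * g y.
Proof.
rewrite mem_states => x_in /eqP x_neq.
have -> : x = state n (absz (x + n%:Z)%R) by rewrite /state; lia.
have : (absz (x + n%:Z)%R < n.*2)%N by lia.
case: (absz _) => [|k] k_lt.
  rewrite (g_state_step (k:=0)) // /state sub0r sum_trans_left_end //.
  by rewrite addrAC gerDr subr_le0.
rewrite sum_trans_interior; last by rewrite /state; lia.
have -> : state n k.+1 - 1 = state n k by rewrite /state; lia.
rewrite (g_state_step (k:=k)); last lia.
have -> : state n k + 1 = state n k.+1 by rewrite /state; lia.
rewrite (g_state_step (k:=k.+1)) //.
have drift_k : pi (state n k.+1) * e k.+1 <= 1 + (1 - pi (state n k.+1)) * e k.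
  by apply: e_drift; lia.
lra.
Qed.

Let sum_e_ge0 a b : (b <= n.*2)%N -> 0 <= \sum_(a <= m < b) e m.
Proof.
move=> b_le; rewrite big_seq sumr_ge0 // => m; rewrite mem_index_iota => m_in.
by apply: e_ge0; lia.
Qed.

Lemma hitting_time_ge_crossing_times :
  ((\sum_(n <= m < n.*2) e m)%:E <= expected_hitting_time n pi 0 n%:Z)%E.
Proof.
have -> : \sum_(n <= m < n.*2) e m = g 0 by rewrite /g add0r.
apply: (hitting_time_ge_potential pi01 (M := \sum_(0 <= m < n.*2) e m)) => //.
- by rewrite mem_states; lia.
- by apply/eqP; lia.
- by rewrite /g (_ : absz _ = n.*2) ?big_geq //; lia.
- move=> x; rewrite mem_states => x_in; rewrite /g.
  by rewrite [leRHS](big_cat_nat (n := absz (x + n%:Z)%R)) //= ?lerDr ?sum_e_ge0; lia.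
- exact: sum_e_ge0.
Qed.

End CrossingTimes.

(* The walk cannot step up from [x] and, when [x < 0], can walk down from [0]
   to [x]; either way it misses [n] with positive probability. *)
Definition up_barrier (R : nzRingType) n (pi : int -> R) : Prop :=
  exists x : int,
    [/\ - n%:Z < x < n%:Z, pi x = 0 & forall y : int, x < y <= 0 -> pi y != 1].

Section UpBarrier.
Variables (R : realType) (n : nat) (pi : int -> R).
Hypothesis n_gt0 : (0 < n)%N.
Hypothesis pi01 : forall x, - n%:Z < x < n%:Z -> 0 <= pi x <= 1.

Let q l := 1 - pi (state n l).

Let q01 l : (0 < l < n.*2)%N -> 0 <= q l <= 1.
Proof.
move=> l_in; have /andP[? ?] : 0 <= pi (state n l) <= 1 by apply: pi01; rewrite /state; lia.
by rewrite /q subr_ge0 lerBlDr lerDl; apply/andP.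
Qed.

(* Since [pi] vanishes at [k0], the drift inequality there holds whatever the
   value [K] of [e k0]; above [k0] the bound propagates as [e m = q m * e m.-1]. *)
Lemma hitting_time_ge_blocked (k0 : nat) (K : R) :
  (0 < k0 < n.*2)%N -> pi (state n k0) = 0 -> 0 <= K ->
  ((K * \prod_(k0.+1 <= l < (maxn k0 n).+1) q l)%:E
     <= expected_hitting_time n pi 0 n%:Z)%E.
Proof.
move=> k0_in pi_k0 K_ge0.
pose e m := if (k0 <= m)%N then K * \prod_(k0.+1 <= l < m.+1) q l else 0.
have e_ge0 m : (m < n.*2)%N -> 0 <= e m.
  move=> m_lt; rewrite /e; case: ifP => // _; rewrite mulr_ge0 // big_seq prodr_ge0 // => l.
  by rewrite mem_index_iota => l_in; have /andP[] := q01 (l := l) ltac:(lia).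
have e_rec m : (k0 < m)%N -> e m = q m * e m.-1.
  case: m => [|m] // m_gt; rewrite /e !ifT ?(ltnW m_gt) //=.
  by rewrite big_nat_recr //= mulrA mulrC.
apply: le_trans (hitting_time_ge_crossing_times (e := e) n_gt0 pi01 e_ge0 _ _); last first.
- move=> k k_in; have [k_lt | k_gt | ->] := ltngtP k k0.
  + by rewrite /e !ifN; [rewrite mulr0 mulr0 addr0 | lia | lia].
  + have /andP[p_ge0 p_le1] : 0 <= pi (state n k) <= 1 by apply: pi01; rewrite /state; lia.
    have := e_ge0 k.-1 ltac:(lia); rewrite (e_rec k) // /q => e_ge0'.
    have : 0 <= (1 - pi (state n k)) * e k.-1 by rewrite mulr_ge0 ?subr_ge0.
    nra.
  + by rewrite pi_k0 mul0r ler_wpDr ?mulr_ge0 ?e_ge0 ?subr_ge0 ?ler01 //; lia.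
- by rewrite /e ifN //; lia.
have -> : K * \prod_(k0.+1 <= l < (maxn k0 n).+1) q l = e (maxn k0 n).
  by rewrite /e ifT ?leq_maxl.
rewrite lee_fin; apply: ler_sum_nat_term => [|m m_in]; [lia | apply: e_ge0; lia].
Qed.

Lemma expected_hitting_time_up_barrier :
  up_barrier n pi -> expected_hitting_time n pi 0 n%:Z = +oo%E.
Proof.
move=> [x [x_in pi_x no_up]]; set k0 := absz (x + n%:Z)%R.
have x_eq : state n k0 = x by rewrite /state; lia.
have P_gt0 : 0 < \prod_(k0.+1 <= l < (maxn k0 n).+1) q l.
  rewrite big_seq prodr_gt0 // => l; rewrite mem_index_iota => l_in.
  have /andP[_ pi_le1] : 0 <= pi (state n l) <= 1 by apply: pi01; rewrite /state; lia.
  rewrite /q subr_gt0 lt_neqAle pi_le1 andbT; apply: no_up; rewrite /state; lia.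
apply/eqyP => V V_gt0.
have := hitting_time_ge_blocked (k0 := k0) (K := V / \prod_(k0.+1 <= l < (maxn k0 n).+1) q l).
rewrite divfK ?gt_eqF //; apply; rewrite ?x_eq ?divr_ge0 ?ltW //; lia.
Qed.

End UpBarrier.

(* Up to a factor, [c k] is the stationary flow [mu_k p_k] from index [k] to
   [k + 1]; these are the detailed-balance equations rewritten for flows. *)
Definition reversible_weights (R : numDomainType) n (pi : int -> R) (c : nat -> R) :=
  (forall m, (m < n.*2)%N -> 0 < c m) /\
  (forall k, (0 < k < n.*2)%N -> c k * (1 - pi (state n k)) = c k.-1 * pi (state n k)).

(* The exact expected time to pass from index [m] to [m + 1]: it satisfies the
   drift recursion with equality. *)
Definition crossing_time (R : fieldType) (c : nat -> R) (m : nat) : R :=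
  1 + 2 * (\sum_(0 <= l < m) c l) / c m.

Lemma crossing_time_balance (R : fieldType) (c : nat -> R) (p : R) k :
  (0 < k)%N -> c k != 0 -> c k.-1 != 0 -> c k * (1 - p) = c k.-1 * p ->
  p * crossing_time c k = 1 + (1 - p) * crossing_time c k.-1.
Proof.
case: k => // k _ /= ck_neq0 ck'_neq0 balance; apply/eqP; rewrite -subr_eq0.
rewrite /crossing_time big_nat_recr //=; set S := \sum_(0 <= l < k) c l.
have -> : p * (1 + 2 * (S + c k) / c k.+1) - (1 + (1 - p) * (1 + 2 * S / c k)) =
    2 * (S + c k) * (c k * p - c k.+1 * (1 - p)) / (c k.+1 * c k).
  by field; rewrite ck_neq0 ck'_neq0.
by rewrite balance subrr mulr0 mul0r.
Qed.

Lemma hitting_time_ge_reversible (R : realType) n (pi : int -> R) (c : nat -> R) :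
  (0 < n)%N -> (forall x, - n%:Z < x < n%:Z -> 0 <= pi x <= 1) ->
  reversible_weights n pi c ->
  ((2 * (\sum_(0 <= l < n) c l) * \sum_(n <= m < n.*2) (c m)^-1)%:E
     <= expected_hitting_time n pi 0 n%:Z)%E.
Proof.
move=> n_gt0 pi01 [c_gt0 balance].
have sum_c_ge0 a b : (b <= n.*2)%N -> 0 <= \sum_(a <= l < b) c l.
  move=> b_le; rewrite big_seq sumr_ge0 // => l; rewrite mem_index_iota => l_in.
  by rewrite ltW ?c_gt0 //; lia.
apply: le_trans (hitting_time_ge_crossing_times (e := crossing_time c) n_gt0 pi01 _ _ _).
- rewrite lee_fin mulr_sumr; apply: ler_sum_nat => m /andP[n_le_m m_lt].
  rewrite /crossing_time; apply: ler_wpDl => //.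
  apply: ler_wpM2r; first by rewrite invr_ge0 ltW ?c_gt0.
  by rewrite ler_pM2l // [leRHS](big_cat_nat (n := n)) //= lerDl sum_c_ge0 // ltnW.
- move=> m m_lt; rewrite /crossing_time addr_ge0 // divr_ge0 ?mulr_ge0 ?sum_c_ge0 ?(ltnW m_lt) //.
  by rewrite ltW ?c_gt0.
- by rewrite /crossing_time big_geq // mulr0 mul0r addr0.
- move=> k k_in; rewrite crossing_time_balance ?balance ?gt_eqF ?c_gt0 //; lia.
Qed.

Lemma sum_reflect_halves (R : nmodType) n (F : nat -> R) :
  \sum_(n <= m < n.*2) F (n.*2.-1 - m)%N = \sum_(0 <= l < n) F l.
Proof.
rewrite -{1}[n]add0n big_addn (_ : n.*2 - n = n)%N; last lia.
by rewrite [RHS]big_nat_rev; apply: eq_big_nat => i i_lt; congr F; lia.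
Qed.

Lemma sum_reflect_halves_r (R : nmodType) n (F : nat -> R) :
  \sum_(0 <= l < n) F (n.*2.-1 - l)%N = \sum_(n <= m < n.*2) F m.
Proof.
rewrite -sum_reflect_halves; apply: eq_big_nat => m m_in; congr F; lia.
Qed.

Lemma state_reflect n k : (k <= n.*2)%N -> - state n k = state n (n.*2 - k).
Proof. by rewrite /state; lia. Qed.

Lemma reversible_weights_mirror (R : numDomainType) n (pi : int -> R) c :
  reversible_weights n pi c ->
  reversible_weights n (mirror pi) (fun m => c (n.*2.-1 - m)%N).
Proof.
move=> [c_gt0 balance]; split=> [m m_lt | k k_in]; first by apply: c_gt0; lia.
rewrite /mirror state_reflect; last lia.
have := balance (n.*2 - k)%N ltac:(lia).
rewrite (_ : (n.*2 - k).-1 = n.*2.-1 - k)%N; last lia.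
rewrite (_ : n.*2.-1 - k.-1 = n.*2 - k)%N; last lia.
by move=> ->; rewrite subKr.
Qed.

Lemma reversible_weights_prod (R : realFieldType) n (pi : int -> R) :
  (forall k, (0 < k < n.*2)%N -> 0 < pi (state n k) < 1) ->
  reversible_weights n pi
    (fun m => \prod_(1 <= l < m.+1) (pi (state n l) / (1 - pi (state n l)))).
Proof.
move=> pi_open; split=> [m m_lt | [|k] k_in //].
  rewrite big_seq prodr_gt0 // => l; rewrite mem_index_iota => l_in.
  by have /andP[? ?] := pi_open l ltac:(lia); rewrite divr_gt0 ?subr_gt0.
have /andP[_ pi_lt1] := pi_open k.+1 k_in.
by rewrite big_nat_recr //= -mulrA divfK // subr_eq0 eq_sym lt_eqF.
Qed.

Lemma sum_mul_sum_inv_ge (R : realFieldType) (I : eqType) (r s : seq I) (a b : I -> R) :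
  (forall i, i \in r -> 0 < a i) -> (forall j, j \in s -> 0 < b j) ->
  2 * (size r * size s)%:R <=
  (\sum_(i <- r) a i) * (\sum_(j <- s) (b j)^-1) +
  (\sum_(j <- s) b j) * (\sum_(i <- r) (a i)^-1).
Proof.
move=> a_gt0 b_gt0.
have ratio_ge2 (x y : R) : 0 < x -> 0 < y -> 2 <= x / y + y / x.
  move=> x_gt0 y_gt0; have -> : x / y + y / x = 2 + (x - y) ^+ 2 / (x * y).
    by field; rewrite !gt_eqF.
  by rewrite lerDl; apply: divr_ge0; [exact: sqr_ge0 | apply: mulr_ge0; exact: ltW].
have -> : (\sum_(i <- r) a i) * (\sum_(j <- s) (b j)^-1) +
    (\sum_(j <- s) b j) * (\sum_(i <- r) (a i)^-1) =
    \sum_(i <- r) \sum_(j <- s) (a i / b j + b j / a i).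
  rewrite [RHS](eq_bigr (fun i => a i * \sum_(j <- s) (b j)^-1 +
                             (\sum_(j <- s) b j) * (a i)^-1)) => [|i _].
    by rewrite big_split /= -big_distrl -big_distrr.
  by rewrite big_split /= -big_distrr -big_distrl.
have sum_const (x : R) (t : seq I) : \sum_(i <- t) x = x *+ size t.
  by rewrite big_const_seq count_predT iter_addr_0.
have -> : 2 * (size r * size s)%:R = \sum_(i <- r) \sum_(j <- s) (2 : R).
  by rewrite !sum_const -mulrnA mulr_natr mulnC.
rewrite big_seq [leRHS]big_seq; apply: ler_sum => i i_in.
rewrite big_seq [leRHS]big_seq; apply: ler_sum => j j_in.
exact: ratio_ge2 (a_gt0 i i_in) (b_gt0 j j_in).
Qed.

Lemma max_hitting_times_ge_interior (R : realType) n (pi : int -> R) :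
  (0 < n)%N -> (forall x, - n%:Z < x < n%:Z -> 0 <= pi x <= 1) ->
  (forall x, - n%:Z < x < n%:Z -> 0 < pi x < 1) ->
  ((2 * n%:R ^+ 2)%:E <= Order.max (expected_hitting_time n pi 0 n%:Z)
                                   (expected_hitting_time n pi 0 (- n%:Z)))%E.
Proof.
move=> n_gt0 pi01 pi_open.
have [c rev] : exists c : nat -> R, reversible_weights n pi c.
  by eexists; apply: reversible_weights_prod => k k_in; apply: pi_open; rewrite /state; lia.
have up := hitting_time_ge_reversible n_gt0 pi01 rev.
have down := hitting_time_ge_reversible n_gt0 (mirror01 pi01) (reversible_weights_mirror rev).
rewrite sum_reflect_halves_r (@sum_reflect_halves _ n (fun l => (c l)^-1)) in down.
rewrite -(expected_hitting_time_mirror _ 0 (- n%:Z)) // oppr0 opprK.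
have c_gt0 a b : (b <= n.*2)%N -> forall m, m \in index_iota a b -> 0 < c m.
  by move=> b_le m; rewrite mem_index_iota => m_in; apply: rev.1; lia.
have := sum_mul_sum_inv_ge (c_gt0 0%N n ltac:(lia)) (c_gt0 n n.*2 (leqnn _)).
rewrite !size_iota subn0 (_ : n.*2 - n = n)%N -?expr2 -?natrM; last lia.
move=> amgm; rewrite le_max; apply/orP.
have [big_up | small_up] := lerP (2 * n%:R ^+ 2)
  (2 * (\sum_(0 <= l < n) c l) * \sum_(n <= m < n.*2) (c m)^-1).
  by left; apply: le_trans up; rewrite lee_fin.
by right; apply: le_trans down; rewrite lee_fin; lra.
Qed.

Lemma pi_neq0_of_no_barrier (R : nzRingType) n (pi : int -> R) x :
  ~ up_barrier n pi -> ~ up_barrier n (mirror pi) -> - n%:Z < x < n%:Z -> pi x != 0.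
Proof.
move=> no_barrier no_barrierM x_in; apply/eqP => pi_x.
apply: no_barrier; exists x; split=> // y y_in; apply/eqP => pi_y.
apply: no_barrierM; exists (- y); split; first lia.
  by rewrite /mirror opprK pi_y subrr.
by move=> z z_in; lia.
Qed.

Lemma pi_open_of_no_barrier (R : realDomainType) n (pi : int -> R) :
  (forall x, - n%:Z < x < n%:Z -> 0 <= pi x <= 1) ->
  ~ up_barrier n pi -> ~ up_barrier n (mirror pi) ->
  forall x, - n%:Z < x < n%:Z -> 0 < pi x < 1.
Proof.
move=> pi01 no_barrier no_barrierM x x_in.
have pi_neq0 := pi_neq0_of_no_barrier no_barrier no_barrierM x_in.
have := pi_neq0_of_no_barrier (x := - x) no_barrierM; rewrite mirrorK /mirror opprK.
move=> /(_ no_barrier ltac:(lia)); rewrite subr_eq0 => pi_neq1.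
by rewrite !lt_def pi_neq0 pi_neq1 pi01.
Qed.

Theorem corollary1 (R : realType) (n : nat) (pi : int -> R) :
  (0 < n)%N ->
  (forall i : int, - n%:Z < i < n%:Z -> 0 <= pi i <= 1) ->
  ((2 / 3 * (n%:R) ^+ 2 : R)%:E <=
    Order.max (expected_hitting_time n pi 0 n%:Z)
              (expected_hitting_time n pi 0 (- n%:Z)))%E.
Proof.
move=> n_gt0 pi01.
have [barrier | no_barrier] := pselect (up_barrier n pi).
  by rewrite expected_hitting_time_up_barrier // le_max leey.
have [barrierM | no_barrierM] := pselect (up_barrier n (mirror pi)).
  rewrite -(expected_hitting_time_mirror _ 0 (- n%:Z)) // oppr0 opprK.
  by rewrite (expected_hitting_time_up_barrier n_gt0 (mirror01 pi01) barrierM) le_max leey orbT.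
apply: le_trans (max_hitting_times_ge_interior n_gt0 pi01
  (pi_open_of_no_barrier pi01 no_barrier no_barrierM)).
by rewrite lee_fin ler_wpM2r ?sqr_ge0 //; lra.
Qed.
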